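(* Let $S^1\subset\mathbb R^2$ be the unit circle, parametrized by $x(\theta)=(\cos\theta,\sin\theta)$. Define, for $m=x(\theta)\ne m'=x(\theta')$, \[ K_{1/2}(m,m')=1-\frac{1}{2\pi}\ln\big(2(1-\cos(\theta'-\theta))\big). \] Then there is no function $K:S^1\times S^1\to\mathbb R$ of positive type (i.e. symmetric positive semidefinite kernel: $\sum_{i,j}\alpha_i\alpha_jK(m_i,m_j)\ge0$ for all finite families) with $K(m,m')=K_{1/2}(m,m')$ for all $m\ne m'$.
   Context: Note $K_{1/2}$ is well defined and jointly continuous on $S^1\times S^1$ minus the diagonal $\{(m,m)\}$, and $K_{1/2}(m,m')\to+\infty$ as $m'\to m$. *)

From Stdlib Require Import Reals Lra.
Open Scope R_scope.

Definition S1 : Type := {p : R * R | fst p ^ 2 + snd p ^ 2 = 1}.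

Lemma cos_sin_on_circle (t : R) : fst (cos t, sin t) ^ 2 + snd (cos t, sin t) ^ 2 = 1.
Proof. simpl. pose proof (sin2_cos2 t) as H. unfold Rsqr in H. lra. Qed.

Definition xS1 (t : R) : S1 := exist _ (cos t, sin t) (cos_sin_on_circle t).

Definition K_half_angle (t t' : R) : R :=
  1 - / (2 * PI) * ln (2 * (1 - cos (t' - t))).

(* Kernel of positive type: symmetric and every finite Gram quadratic form
   is nonnegative (families indexed by 0..n, i.e. n+1 points). *)
Definition positive_type (K : S1 -> S1 -> R) : Prop :=
  (forall m m', K m m' = K m' m) /\
  (forall (n : nat) (pts : nat -> S1) (a : nat -> R),
     0 <= sum_f_R0 (fun i => sum_f_R0 (fun j => a i * a j * K (pts i) (pts j)) n) n).

From Stdlib Require Import Reals Lra Classical ClassicalEpsilon.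
Open Scope R_scope.

(* Suppose K is of positive type and agrees with K_{1/2} off the
   diagonal, and let d t := K(x(t), x(t)) be its diagonal along the
   parametrization.  The 2x2 Gram inequality with coefficients (1, -1) gives
   2 K(m, m') <= K(m, m) + K(m', m'), hence d t + d t' >= 2 K_{1/2}(t, t'),
   which tends to +oo as t' -> t.  So any two sufficiently close distinct
   points cannot both have a small diagonal value: in every interval, one of
   two disjoint thirds lies entirely in {d > n}.  Iterating this for
   n = 0, 1, 2, ... produces nested closed intervals, whose common point p
   satisfies d p > n for every n, which is absurd. *)

Lemma nested_intervals_common_point (a b : nat -> R) :
  (forall k, a k <= b k) ->
  (forall k, a k <= a (S k) /\ b (S k) <= b k) ->
  exists p, forall k, a k <= p <= b k.
Proof.
  intros Hab Hstep.
  assert (Hmono : forall k j, a k <= a (k + j)%nat /\ b (k + j)%nat <= b k).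
  { intros k j; induction j as [|j IH].
    - rewrite Nat.add_0_r; lra.
    - rewrite Nat.add_succ_r; destruct (Hstep (k + j)%nat); lra. }
  assert (Hcross : forall k m, a k <= b m).
  { intros k m.
    destruct (Hmono k m) as [A _]; destruct (Hmono m k) as [_ B].
    rewrite Nat.add_comm in B; pose proof (Hab (k + m)%nat); lra. }
  destruct (completeness (fun x => exists k, x = a k)) as [p [Pub Plub]].
  - exists (b 0%nat); intros x [k ->]; apply Hcross.
  - exists (a 0%nat); eauto.
  - exists p; intro k; split.
    + apply Pub; eauto.
    + apply Plub; intros x [j ->]; apply Hcross.
Qed.

Lemma not_everywhere_locally_large (d : R -> R) :
  ~ (forall n a b, a < b -> exists a' b',
        a <= a' /\ a' < b' /\ b' <= b /\ forall x, a' <= x <= b' -> INR n < d x).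
Proof.
  intro Hlarge.
  assert (Hchoice : forall n (I : R * R), exists J : R * R, fst I < snd I ->
     fst I <= fst J /\ fst J < snd J /\ snd J <= snd I /\
     forall x, fst J <= x <= snd J -> INR n < d x).
  { intros n [a b]; destruct (Rlt_dec a b) as [h|h].
    - destruct (Hlarge n a b h) as [a' [b' P]]; exists (a', b'); auto.
    - exists (0, 0); simpl; intro; lra. }
  destruct (choice _ (fun n => choice _ (Hchoice n))) as [refine Hrefine].
  pose (I := fix I k := match k with O => (0, 1) | S k => refine k (I k) end).
  assert (Hnondeg : forall k, fst (I k) < snd (I k)).
  { induction k as [|k IH]; simpl; [lra | apply (Hrefine k _ IH)]. }
  destruct (nested_intervals_common_point (fun k => fst (I k)) (fun k => snd (I k)))
    as [p Hp].
  - intro k; apply Rlt_le, Hnondeg.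
  - intro k; simpl; destruct (Hrefine k _ (Hnondeg k)) as [A [_ [B _]]]; auto.
  - assert (Hbig : forall n, INR n < d p).
    { intro n; destruct (Hrefine n _ (Hnondeg n)) as [_ [_ [_ D]]].
      apply D, (Hp (S n)). }
    destruct (INR_unbounded (d p)) as [n Hn]; specialize (Hbig n); lra.
Qed.

(* If d x + d y tends to +oo as y -> x with y <> x, then d is locally large
   everywhere: of the first and last thirds of a short enough subinterval,
   one lies in {d > n}, since points of both cannot be too close together. *)
Lemma locally_large_of_pair_blowup (d : R -> R) :
  (forall n : nat, exists delta, 0 < delta /\
     forall x y, 0 < Rabs (y - x) < delta -> 2 * INR n < d x + d y) ->
  forall n a b, a < b -> exists a' b',
    a <= a' /\ a' < b' /\ b' <= b /\ forall x, a' <= x <= b' -> INR n < d x.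
Proof.
  intros Hblow n a b Hab.
  destruct (Hblow n) as [delta [Hdelta Hpair]].
  set (L := Rmin (b - a) (delta / 2)).
  assert (HL : 0 < L /\ L <= b - a /\ L <= delta / 2).
  { unfold L; split; [apply Rmin_glb_lt; lra | split; [apply Rmin_l | apply Rmin_r]]. }
  destruct (classic (forall x, a <= x <= a + L / 3 -> INR n < d x)) as [A|A].
  { exists a, (a + L / 3); repeat split; try lra; auto. }
  destruct (classic (forall x, a + 2 * L / 3 <= x <= a + L -> INR n < d x)) as [B|B].
  { exists (a + 2 * L / 3), (a + L); repeat split; try lra; auto. }
  exfalso.
  apply not_all_ex_not in A as [x A]; apply imply_to_and in A as [Ax Ad].
  apply not_all_ex_not in B as [y B]; apply imply_to_and in B as [By Bd].
  apply Rnot_lt_le in Ad; apply Rnot_lt_le in Bd.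
  assert (Hxy : 0 < Rabs (y - x) < delta) by (rewrite Rabs_right; lra).
  specialize (Hpair x y Hxy); lra.
Qed.

Lemma K_half_angle_abs (t t' : R) :
  K_half_angle t t' = K_half_angle 0 (Rabs (t' - t)).
Proof.
  unfold K_half_angle; rewrite Rminus_0_r.
  destruct (Rcase_abs (t' - t)) as [Hn|Hp].
  - rewrite Rabs_left, cos_neg by lra; reflexivity.
  - rewrite Rabs_right by lra; reflexivity.
Qed.

(* Quantitative blow-up: for 0 < h < 1 and h < exp (-PI M), the point h is not
   congruent to 0 on the circle and K_{1/2}(0, h) > M.  Indeed
   2 (1 - cos h) = (2 sin (h/2))^2 < h^2 < exp (-2 PI M). *)
Lemma K_half_angle_large_near_zero (M h : R) :
  0 < h -> h < 1 -> h < exp (- (PI * M)) ->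
  cos h < 1 /\ M < K_half_angle 0 h.
Proof.
  intros Hh0 Hh1 HhM; pose proof PI2_1; pose proof PI_RGT_0.
  set (s := sin (h / 2)).
  assert (Hcos : cos h = 1 - 2 * s * s).
  { unfold s; rewrite <- cos_2a_sin; f_equal; field. }
  assert (Hs0 : 0 < s) by (apply sin_gt_0; lra).
  assert (Hs1 : s < h / 2) by (apply sin_lt_x; lra).
  assert (Hss : 0 < s * s) by (apply Rmult_lt_0_compat; lra).
  split; [rewrite Hcos; lra |].
  unfold K_half_angle; rewrite Rminus_0_r.
  replace (2 * (1 - cos h)) with ((2 * s) * (2 * s)) by (rewrite Hcos; ring).
  assert (Hln_sq : ln ((2 * s) * (2 * s)) < ln (h * h)).
  { apply ln_increasing; [nra | apply Rmult_le_0_lt_compat; lra]. }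
  assert (Hln_h : ln h < - (PI * M)).
  { rewrite <- (ln_exp (- (PI * M))); apply ln_increasing; auto. }
  rewrite (ln_mult h h) in Hln_sq by lra.
  assert (Hinv : 0 < / (2 * PI)) by (apply Rinv_0_lt_compat; lra).
  assert (Hbound : / (2 * PI) * ln ((2 * s) * (2 * s)) < / (2 * PI) * (- 2 * (PI * M)))
    by (apply Rmult_lt_compat_l; lra).
  replace (/ (2 * PI) * (- 2 * (PI * M))) with (- M) in Hbound by (field; lra).
  lra.
Qed.

Lemma K_half_angle_blowup (M : R) :
  exists delta, 0 < delta /\ forall t t', 0 < Rabs (t' - t) < delta ->
    cos (t' - t) < 1 /\ M < K_half_angle t t'.
Proof.
  exists (Rmin 1 (exp (- (PI * M)))); split.
  { apply Rmin_glb_lt; [lra | apply exp_pos]. }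
  intros t t' [H0 H1].
  pose proof (Rmin_l 1 (exp (- (PI * M)))); pose proof (Rmin_r 1 (exp (- (PI * M)))).
  destruct (K_half_angle_large_near_zero M (Rabs (t' - t))) as [Hc HK]; try lra.
  rewrite K_half_angle_abs; split; auto.
  destruct (Rcase_abs (t' - t)).
  - rewrite Rabs_left, cos_neg in Hc by lra; exact Hc.
  - rewrite Rabs_right in Hc by lra; exact Hc.
Qed.

Lemma xS1_neq (t t' : R) : cos (t' - t) < 1 -> xS1 t <> xS1 t'.
Proof.
  intros Hc E; apply (f_equal (@proj1_sig _ _)) in E; simpl in E.
  injection E as Ecos Esin.
  rewrite cos_minus, <- Ecos, <- Esin in Hc.
  pose proof (sin2_cos2 t); unfold Rsqr in *; lra.
Qed.

Lemma positive_type_pair (K : S1 -> S1 -> R) (m m' : S1) :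
  positive_type K -> 2 * K m m' <= K m m + K m' m'.
Proof.
  intros [Hsym Hpos].
  specialize (Hpos 1%nat (fun i => match i with O => m | _ => m' end)
                         (fun i => match i with O => 1 | _ => -1 end)).
  simpl in Hpos; rewrite (Hsym m' m) in Hpos; lra.
Qed.

Theorem mainTheorem6 :
  ~ exists K : S1 -> S1 -> R,
      positive_type K /\
      (forall t t' : R, xS1 t <> xS1 t' -> K (xS1 t) (xS1 t') = K_half_angle t t').
Proof.
  intros [K [Hpos HK]].
  set (d := fun t => K (xS1 t) (xS1 t)).
  apply (not_everywhere_locally_large d), locally_large_of_pair_blowup.
  intro n; destruct (K_half_angle_blowup (INR n)) as [delta [Hdelta Hblow]].
  exists delta; split; auto.
  intros x y Hxy; destruct (Hblow x y Hxy) as [Hc HKbig].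
  pose proof (positive_type_pair K (xS1 x) (xS1 y) Hpos) as Hgram.
  rewrite (HK x y (xS1_neq x y Hc)) in Hgram.
  unfold d; lra.
Qed.
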